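(* Let $P$ be the Petersen graph, i.e. the graph whose vertices are the $2$-element subsets of $\{1,2,3,4,5\}$, two vertices being adjacent if and only if the corresponding subsets are disjoint. Then the resolving topological index of $P$ is $\mathcal{R}(P)=\frac{5}{3}$.
   Context: All graphs are finite, simple and connected, with at least two vertices; $d(u,v)$ denotes the shortest-path distance. $V_p$ denotes the set of all unordered pairs $(u,v)$ of distinct vertices. A vertex $x$ resolves the pair $(u,v)$ if $d(x,u)\neq d(x,v)$. For $(u,v)\in V_p$, $R(u,v)$ is the set of all vertices resolving $(u,v)$ (it always contains $u$ and $v$). The resolving share of a vertex $w$ for $(u,v)$ is $r_w(u,v)=\frac{1}{|R(u,v)|}$ if $w$ resolves $u$ and $v$, and $r_w(u,v)=0$ otherwise. For a vertex $w$, $R(w)$ is the set of pairs in $V_p$ resolved by $w$ (nonempty, as it contains all pairs $(w,x)$). The average resolving share of $w$ is $ar_w(G)=\frac{1}{|R(w)|}\sum_{(u,v)\in R(w)} r_w(u,v)$, and the resolving topological index of $G$ is $\mathcal{R}(G)=\sum_{w\in V(G)} ar_w(G)$. *)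

From mathcomp Require Import all_boot all_order all_algebra.
Set Implicit Arguments. Unset Strict Implicit. Unset Printing Implicit Defensive.
Import Order.TTheory GRing.Theory Num.Theory.
Local Open Scope ring_scope.

Section Resolving.
Variables (T : finType) (e : rel T).
(* e is intended to be a symmetric irreflexive adjacency relation
   of a finite simple connected graph on T. *)

Fixpoint ball (n : nat) (u : T) : {set T} :=
  match n with
  | 0 => [set u]
  | n'.+1 => ball n' u :|: [set y | [exists x in ball n' u, e x y]]
  end.

(* shortest-path distance: least n with v within n steps of u
   (for a connected graph this is < #|T|) *)
Definition gdist (u v : T) : nat :=
  find (fun n => v \in ball n u) (iota 0 #|T|).

Definition Vp : {set {set T}} := [set p : {set T} | #|p| == 2%N].

Definition resolves (x : T) (p : {set T}) : bool :=
  [exists u in p, exists v in p, gdist x u != gdist x v].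

Definition Rpair (p : {set T}) : {set T} := [set w | resolves w p].

Definition rshare (w : T) (p : {set T}) : rat :=
  if resolves w p then (#|Rpair p|%:R)^-1 else 0.

Definition Rvert (w : T) : {set {set T}} := [set p in Vp | resolves w p].

Definition avg_share (w : T) : rat :=
  (#|Rvert w|%:R)^-1 * \sum_(p in Rvert w) rshare w p.

Definition resolving_index : rat := \sum_(w : T) avg_share w.
End Resolving.

Definition petersen_vertex := {A : {set 'I_5} | #|A| == 2%N}.
Definition petersen_adj : rel petersen_vertex :=
  fun A B => [disjoint (val A) & (val B)].

From mathcomp Require Import all_boot all_order all_algebra.

Set Implicit Arguments. Unset Strict Implicit. Unset Printing Implicit Defensive.
Import GRing.Theory Num.Theory.
Local Open Scope ring_scope.

(* In the Petersen graph every pair u <> v is resolved by exactly six vertices: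
   u, v and four others.  If u ~ v these are the two further neighbours of u and
   of v; otherwise they are the two neighbours of u not adjacent to v and vice
   versa (the common neighbour and the three remaining vertices lie at distance
   2 from both).  Hence every resolving share equals 1/6, so does every average
   share, and the index is 10/6 = 5/3.  The count of six is checked by
   computation on a coding of the vertices by increasing pairs of 'I_5. *)

Section ResolvingIndex.
Variables (T : finType) (e : rel T).

Lemma ball0 x y : (y \in ball e 0 x) = (y == x).
Proof. by rewrite /= in_set1. Qed.

Lemma ballS n x y :
  (y \in ball e n.+1 x) = (y \in ball e n x) || [exists z in ball e n x, e z y].
Proof. by rewrite /= in_setU inE. Qed.

Lemma ball1 x y : (y \in ball e 1 x) = (y == x) || e x y.
Proof.
rewrite ballS ball0; congr (_ || _).
apply/existsP/idP => [[z /andP[]]|exy]; first by rewrite ball0 => /eqP ->.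
by exists x; rewrite ball0 eqxx.
Qed.

Lemma mem_ball2 x y :
  [|| y == x, e x y | [exists z, e x z && e z y]] -> y \in ball e 2 x.
Proof.
rewrite ballS ball1 orbA => /orP[-> // | /existsP[z /andP[exz ezy]]].
by apply/orP; right; apply/existsP; exists z; rewrite ball1 exz orbT.
Qed.

Lemma gdist_eq0 x y : (gdist e x y == 0%N) = (y == x).
Proof.
have : (0 < #|{: T}|)%N by apply/card_gt0P; exists x.
by rewrite /gdist; case: #|{: T}| => //= n _; rewrite ball0; case: (y == x).
Qed.

Lemma gdistxx x : gdist e x x = 0%N.
Proof. by apply/eqP; rewrite gdist_eq0. Qed.

(* The first three entries of [iota 0 #|T|] decide every distance at most 2. *)
Lemma gdist_ball2 x y : (2 < #|{: T}|)%N -> y \in ball e 2 x ->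
  gdist e x y = if y == x then 0%N else if e x y then 1%N else 2%N.
Proof.
move=> T3 y2; rewrite /gdist; case: #|{: T}| T3 => [|[|[|m]]] // _.
rewrite (_ : iota 0 m.+3 = [:: 0, 1, 2 & iota 3 m]%N) //= ball0 ball1 y2.
by case: (y == x); case: (e x y).
Qed.

Lemma resolves_set2 x u v :
  resolves e x [set u; v] = (gdist e x u != gdist e x v).
Proof.
apply/existsP/idP => [[u' /andP[u'uv /existsP[v' /andP[v'uv]]]] | duv].
  by move: u'uv v'uv; rewrite !in_set2 => /orP[]/eqP-> /orP[]/eqP->;
     rewrite ?eqxx // eq_sym.
exists u; rewrite set21 /=; apply/existsP; exists v.
by rewrite set22 duv.
Qed.

Lemma resolves_self w x : x != w -> resolves e w [set w; x].
Proof. by move=> xw; rewrite resolves_set2 gdistxx eq_sym gdist_eq0. Qed.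

Lemma Rvert_neq0 w : (1 < #|{: T}|)%N -> Rvert e w != set0.
Proof.
move=> T2; have /card_gt0P[x] : (0 < #|[set~ w]|)%N by rewrite cardsC1; case: #|_| T2.
rewrite in_setC1 => xw; apply/set0Pn; exists [set w; x].
by rewrite !inE cards2 (eq_sym w) xw resolves_self.
Qed.

Section UniformResolvingSets.
Variable k : nat.
Hypothesis card_Rpair : {in Vp T, forall p, #|Rpair e p| = k}.

Lemma avg_share_uniform w : (1 < #|{: T}|)%N -> avg_share e w = k%:R^-1.
Proof.
move=> T2; rewrite /avg_share (eq_bigr (fun=> k%:R^-1)); last first.
  by move=> p; rewrite inE => /andP[/card_Rpair Rp wp]; rewrite /rshare wp Rp.
have Rw_neq0 : #|Rvert e w|%:R != 0 :> rat.
  by rewrite pnatr_eq0 -lt0n card_gt0 Rvert_neq0.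
by rewrite sumr_const -(mulr_natl k%:R^-1) mulrA mulVf ?mul1r.
Qed.

Lemma resolving_index_uniform : (1 < #|{: T}|)%N ->
  resolving_index e = #|{: T}|%:R / k%:R.
Proof.
move=> T2; rewrite /resolving_index (eq_bigr (fun=> k%:R^-1)) => [|w _].
  by rewrite sumr_const -(mulr_natl k%:R^-1).
exact: avg_share_uniform.
Qed.

End UniformResolvingSets.
End ResolvingIndex.

Lemma disjoint_set2 (T : finType) (a b c d : T) :
  [disjoint [set a; b] & [set c; d]] = [&& a != c, a != d, b != c & b != d].
Proof.
by rewrite disjoints_subset subUset !sub1set !in_setC !in_set2 !negb_or -!andbA.
Qed.

Lemma eq_set2 (T : finType) (a b c d : T) :
  ([set a; b] == [set c; d]) =
  [&& a \in [set c; d], b \in [set c; d], c \in [set a; b] & d \in [set a; b]].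
Proof. by rewrite eqEsubset !subUset !sub1set !andbA. Qed.

Definition code := ('I_5 * 'I_5)%type.

(* [ord_enum] does not reduce under [vm_compute] (it goes through the opaque
   [idP]), hence this explicit enumeration. *)
Definition ords5 : seq 'I_5 :=
  [:: Ordinal (erefl (0 < 5)%N); Ordinal (erefl (1 < 5)%N);
      Ordinal (erefl (2 < 5)%N); Ordinal (erefl (3 < 5)%N);
      Ordinal (erefl (4 < 5)%N)].

Lemma mem_ords5 i : i \in ords5.
Proof. by case: i => [[|[|[|[|[|k]]]]] ?]. Qed.

Definition codes : seq code :=
  [seq (i, j) | i : 'I_5 <- ords5, j : 'I_5 <- [seq j : 'I_5 <- ords5 | (i < j)%N]].

Definition code_set (c : code) : {set 'I_5} := [set c.1; c.2].

Definition code_adj (a b : code) : bool :=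
  [&& a.1 != b.1, a.1 != b.2, a.2 != b.1 & a.2 != b.2].

Definition code_dist (a b : code) : nat :=
  if a == b then 0 else if code_adj a b then 1 else 2.

Definition petersen_vertex0 : petersen_vertex.
Proof. by exists [set ord0; ord_max]; rewrite cards2. Defined.

Definition vertex_of (c : code) : petersen_vertex :=
  insubd petersen_vertex0 (code_set c).

Lemma val_vertex_of c : c \in codes -> val (vertex_of c) = code_set c.
Proof.
move=> cP; rewrite /vertex_of insubdK // unfold_in cards2.
by have /allP/(_ c cP) -> : all (fun c : code => c.1 != c.2) codes by vm_compute.
Qed.

Lemma eq_vertex_of : {in codes &, forall a b,
  (vertex_of a == vertex_of b) = (a == b)}.
Proof.
move=> a b aP bP; rewrite -val_eqE !val_vertex_of // eq_set2 !in_set2.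
have : all (fun a : code => all (fun b : code =>
    [&& (a.1 == b.1) || (a.1 == b.2), (a.2 == b.1) || (a.2 == b.2),
        (b.1 == a.1) || (b.1 == a.2) & (b.2 == a.1) || (b.2 == a.2)]
    == (a == b)) codes) codes by vm_compute.
by move/allP/(_ a aP)/allP/(_ b bP)/eqP.
Qed.

Lemma petersen_adj_vertex_of : {in codes &, forall a b,
  petersen_adj (vertex_of a) (vertex_of b) = code_adj a b}.
Proof. by move=> a b aP bP; rewrite /petersen_adj !val_vertex_of ?disjoint_set2. Qed.

Lemma vertex_of_onto (x : petersen_vertex) : exists2 c, c \in codes & x = vertex_of c.
Proof.
case: x => A A2; have /cards2P[i [j [ij A_ij]]] := A2.
have : all (fun i => all (fun j => (i == j) || has (fun c : code =>
    ((c.1 == i) && (c.2 == j)) || ((c.1 == j) && (c.2 == i))) codes)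
    ords5) ords5 by vm_compute.
move/allP/(_ i (mem_ords5 i))/allP/(_ j (mem_ords5 j)).
rewrite (negbTE ij) => /hasP[c cP ijc]; exists c => //; apply: val_inj.
rewrite val_vertex_of //= A_ij.
by case/orP: ijc => /andP[/eqP<- /eqP<-] //; rewrite /code_set setUC.
Qed.

Lemma card_petersen_set (Q : pred petersen_vertex) :
  #|[set x | Q x]| = count (Q \o vertex_of) codes.
Proof.
have uniq_vertices : uniq (map vertex_of codes).
  by rewrite map_inj_in_uniq // => a b aP bP /eqP; rewrite eq_vertex_of // => /eqP.
have mem_vertices x : x \in map vertex_of codes.
  by have [c cP ->] := vertex_of_onto x; apply: map_f.
rewrite cardE -(perm_size (uniq_perm (filter_uniq Q uniq_vertices) (enum_uniq _) _)).
  by rewrite size_filter count_map.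
by move=> x; rewrite mem_filter mem_vertices mem_enum inE andbT.
Qed.

Lemma card_petersen : #|{: petersen_vertex}| = 10%N.
Proof. by rewrite -cardsT (_ : [set: _] = [set x | predT x]) ?card_petersen_set. Qed.

Lemma gdist_vertex_of : {in codes &, forall a b,
  gdist petersen_adj (vertex_of a) (vertex_of b) = code_dist a b}.
Proof.
move=> a b aP bP; rewrite gdist_ball2 ?card_petersen //.
  by rewrite eq_vertex_of // petersen_adj_vertex_of // /code_dist eq_sym.
apply: mem_ball2; rewrite eq_vertex_of // petersen_adj_vertex_of //.
have diameter2 : all (fun a : code => all (fun b : code =>
    [|| b == a, code_adj a b | has (fun c => code_adj a c && code_adj c b) codes])
    codes) codes by vm_compute.
move/allP/(_ a aP)/allP/(_ b bP)/or3P: diameter2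
  => [-> // | -> | /hasP[c cP /andP[ac cb]]]; first by rewrite orbT.
apply/or3P/Or33/existsP; exists (vertex_of c).
by rewrite !petersen_adj_vertex_of ?ac.
Qed.

Lemma card_Rpair_petersen : {in Vp petersen_vertex, forall p,
  #|Rpair petersen_adj p| = 6%N}.
Proof.
move=> p; rewrite inE => /cards2P[u [v [+ ->]]].
have [a aP ->] := vertex_of_onto u; have [b bP ->] := vertex_of_onto v.
rewrite eq_vertex_of // /Rpair card_petersen_set => ab.
rewrite (eq_in_count (a2 := fun c => code_dist c a != code_dist c b)); last first.
  by move=> c cP /=; rewrite resolves_set2 !gdist_vertex_of.
have : all (fun a : code => all (fun b : code => (a == b) ||
    (count (fun c => code_dist c a != code_dist c b) codes == 6%N)) codes) codes
  by vm_compute.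
by move/allP/(_ a aP)/allP/(_ b bP); rewrite (negbTE ab) => /eqP.
Qed.

Theorem theorem3p6 :
  resolving_index petersen_adj = (5%:R / 3%:R : rat).
Proof.
by rewrite (resolving_index_uniform card_Rpair_petersen) card_petersen.
Qed.
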